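(* Let $(V,\nu)$ and $(W,\mu)$ be strongly complete PN-spaces and let $T\in B(V,W)$ be bijective. Then the inverse $T^{-1}:W\to V$ belongs to $B(W,V)$, i.e. it is a linear operator continuous for the strong topologies.
   Context: A distance distribution function is a map $F:[-\infty,+\infty]\to[0,1]$ that is nondecreasing, left-continuous on $\mathbb{R}$, with $F(-\infty)=0$, $F(+\infty)=1$ and $F(0)=0$; the set of these is $\Delta^+$. $\mathcal{D}^+\subseteq\Delta^+$ denotes the proper ones, i.e. those with $\lim_{x\to+\infty}F(x)=1$. $H_0\in\Delta^+$ is $H_0(x)=0$ for $x\le 0$ and $H_0(x)=1$ for $x>0$. For $F,G\in\Delta^+$ let $\tau_M(F,G)(x)=\sup\{\min(F(s),G(t)) : s+t=x\}$. In this paper a PN-space $(V,\nu)$ is a real vector space $V$ with a map $\nu:V\to\Delta^+$, $p\mapsto\nu_p$, such that for all $p,q\in V$: $\nu_p=H_0$ iff $p=0$; $\nu_{p+q}\ge\tau_M(\nu_p,\nu_q)$ pointwise; and $\nu_{\alpha p}(x)=\nu_p(x/|\alpha|)$ for all real $\alpha\neq0$ and $x\ge 0$. Standing assumption: $\nu_p\in\mathcal{D}^+$ for every $p\in V$. For $x\in V$ and $w\in(0,1)$ put $\|x\|_w=\sup\{t\in\mathbb{R}:\nu_x(t)<w\}$; for each $w$ this is a norm on $V$, and $w\mapsto\|x\|_w$ is nondecreasing. For $p\in V$, $r>0$, $w\in(0,1)$ put $B_w(p;r)=\{x\in V:\|x-p\|_w<r\}$. The strong topology on $V$ is generated by the neighbourhoods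 $N_p(t)=\{q\in V:\nu_{p-q}(t)>1-t\}$, $p\in V$, $t>0$; equivalently the family $\{B_w(p;r)\}$ is a basis for it. A sequence $(p_n)$ converges strongly to $p$ if for every $t>0$ one has $p_n\in N_p(t)$ for all large $n$; it is strongly Cauchy if for every $t>0$ there is $N$ with $\nu_{p_n-p_m}(t)>1-t$ for all $m,n>N$. $(V,\nu)$ is strongly complete if every strongly Cauchy sequence converges strongly. $B(V,W)$ denotes the set of linear operators $V\to W$ that are continuous for the strong topologies. *)

From Stdlib Require Import Reals Lra.
Open Scope R_scope.

Record RVS := {
  vcar :> Type;
  vzero : vcar;
  vadd : vcar -> vcar -> vcar;
  vopp : vcar -> vcar;
  vscal : R -> vcar -> vcar;
  vadd_assoc : forall x y z, vadd x (vadd y z) = vadd (vadd x y) z;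
  vadd_comm : forall x y, vadd x y = vadd y x;
  vadd_0 : forall x, vadd x vzero = x;
  vadd_opp : forall x, vadd x (vopp x) = vzero;
  vscal_assoc : forall a b x, vscal a (vscal b x) = vscal (a * b) x;
  vscal_1 : forall x, vscal 1 x = x;
  vscal_addr : forall a x y, vscal a (vadd x y) = vadd (vscal a x) (vscal a y);
  vscal_addl : forall a b x, vscal (a + b) x = vadd (vscal a x) (vscal b x)
}.

Definition vsub {V : RVS} (x y : V) : V := vadd V x (vopp V y).

(** Distance distribution functions.  An element F of Delta^+ is a map on
    [-oo,+oo]; since F(-oo)=0 and F(+oo)=1 are forced, we represent F by its
    restriction to R. *)
Definition is_ddf (F : R -> R) : Prop :=
  (forall x, 0 <= F x <= 1) /\
  (forall x y, x <= y -> F x <= F y) /\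
  (forall x eps, 0 < eps -> exists d, 0 < d /\
       forall y, x - d < y < x -> F x - F y < eps) /\
  F 0 = 0.

Definition is_proper (F : R -> R) : Prop :=
  forall eps, 0 < eps -> exists M, forall x, M <= x -> Rabs (F x - 1) < eps.

Definition H0 (x : R) : R := if Rle_dec x 0 then 0 else 1.

(** tau_M(F,G) <= H pointwise on R, i.e. sup_{s+t=x} min(F s, G t) <= H x.
    (At x = +oo both sides equal 1.) *)
Definition tauM_le (F G H : R -> R) : Prop :=
  forall x s t, s + t = x -> Rmin (F s) (G t) <= H x.

(** PN-spaces (with the standing assumption nu_p in D^+) *)
Record PNSpace := {
  pn_vs :> RVS;
  nu : pn_vs -> R -> R;
  nu_ddf : forall p, is_ddf (nu p);
  nu_proper : forall p, is_proper (nu p);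
  nu_H0 : forall p, (forall x, nu p x = H0 x) <-> p = vzero pn_vs;
  nu_triangle : forall p q, tauM_le (nu p) (nu q) (nu (vadd pn_vs p q));
  nu_scal : forall p a x, a <> 0 -> 0 <= x ->
      nu (vscal pn_vs a p) x = nu p (x / Rabs a)
}.

Definition Nbd {V : PNSpace} (p : V) (t : R) (q : V) : Prop :=
  nu V (vsub p q) t > 1 - t.

Definition strongly_open {V : PNSpace} (U : V -> Prop) : Prop :=
  forall p, U p -> exists t, 0 < t /\ forall q, Nbd p t q -> U q.

Definition strongly_continuous {V W : PNSpace} (f : V -> W) : Prop :=
  forall U : W -> Prop, strongly_open U -> strongly_open (fun x => U (f x)).

Definition is_linear {V W : PNSpace} (f : V -> W) : Prop :=
  (forall x y, f (vadd V x y) = vadd W (f x) (f y)) /\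
  (forall a x, f (vscal V a x) = vscal W a (f x)).

Definition in_B {V W : PNSpace} (f : V -> W) : Prop :=
  is_linear f /\ strongly_continuous f.

Definition strongly_converges {V : PNSpace} (s : nat -> V) (p : V) : Prop :=
  forall t, 0 < t -> exists N, forall n, (N <= n)%nat -> Nbd p t (s n).

Definition strongly_Cauchy {V : PNSpace} (s : nat -> V) : Prop :=
  forall t, 0 < t -> exists N, forall m n, (N < m)%nat -> (N < n)%nat ->
    nu V (vsub (s n) (s m)) t > 1 - t.

Definition strongly_complete (V : PNSpace) : Prop :=
  forall s : nat -> V, strongly_Cauchy s -> exists p, strongly_converges s p.

From Stdlib Require Import Reals Lra Lia Classical ClassicalEpsilon.
Open Scope R_scope.

(* The neighbourhoods [N0(t) = {p | nu p t > 1 - t}]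
   behave like balls of a metric: they are nested, symmetric and satisfy [N0(a) + N0(b) ⊆ N0(a+b)].
   Since [T] is onto, [W] is the union of the images of the sets [{x | nu x (n+1) > 1 - t/2}]
   (properness of [nu x]), so by Baire's theorem in the complete space [W] one of them is dense
   in a ball; differences and rescaling show that [T(N0 t)] is dense in some [N0 s].
   Completeness of [V] and continuity of [T] then turn approximate into exact preimages by a
   geometric series of corrections, so [T(N0 t) ⊇ N0 s] and the linear map [T^-1] is continuous. *)

Section VectorAlgebra.
Variable V : RVS.

Lemma vadd_0l (x : V) : vadd V (vzero V) x = x.
Proof. rewrite vadd_comm; apply vadd_0. Qed.

Lemma vadd_oppl (x : V) : vadd V (vopp V x) x = vzero V.
Proof. rewrite vadd_comm; apply vadd_opp. Qed.

Lemma vadd_cancel (a x y : V) : vadd V a x = vadd V a y -> x = y.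
Proof.
  intro E.
  rewrite <- (vadd_0l x), <- (vadd_0l y), <- (vadd_oppl a), <- !vadd_assoc, E.
  reflexivity.
Qed.

Lemma vscal_0 (x : V) : vscal V 0 x = vzero V.
Proof.
  apply (vadd_cancel (vscal V 0 x)).
  rewrite <- vscal_addl, Rplus_0_r, vadd_0; reflexivity.
Qed.

Lemma vopp_scal (x : V) : vopp V x = vscal V (-1) x.
Proof.
  apply (vadd_cancel x); rewrite vadd_opp.
  rewrite <- (vscal_1 V x) at 1; rewrite <- vscal_addl.
  replace (1 + -1) with 0 by ring; symmetry; apply vscal_0.
Qed.

Lemma vopp_opp (x : V) : vopp V (vopp V x) = x.
Proof.
  rewrite !vopp_scal, vscal_assoc.
  replace (-1 * -1) with 1 by ring; apply vscal_1.
Qed.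

Lemma vopp_add (x y : V) : vopp V (vadd V x y) = vadd V (vopp V x) (vopp V y).
Proof. rewrite !vopp_scal; apply vscal_addr. Qed.

Lemma vsub_xx (x : V) : vsub x x = vzero V.
Proof. apply vadd_opp. Qed.

Lemma vsub_addK (x s : V) : vadd V (vsub x s) s = x.
Proof. unfold vsub; rewrite <- vadd_assoc, vadd_oppl, vadd_0; reflexivity. Qed.

Lemma vsub_chain (p q r : V) : vsub p q = vadd V (vsub p r) (vsub r q).
Proof.
  unfold vsub; rewrite <- vadd_assoc, (vadd_assoc V (vopp V r)), vadd_oppl, vadd_0l.
  reflexivity.
Qed.

Lemma vopp_sub (p q : V) : vopp V (vsub p q) = vsub q p.
Proof. unfold vsub; rewrite vopp_add, vopp_opp, vadd_comm; reflexivity. Qed.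

Lemma vsub_eq0 (p q : V) : vsub p q = vzero V -> p = q.
Proof. intro E; rewrite <- (vsub_addK p q), E; apply vadd_0l. Qed.

Lemma vsub_sub_self (a b : V) : vsub a (vsub a b) = b.
Proof.
  unfold vsub; rewrite vopp_add, vopp_opp, vadd_assoc, vadd_opp, vadd_0l; reflexivity.
Qed.

Lemma vsub_add (a b c : V) : vsub (vsub a b) c = vsub a (vadd V b c).
Proof. unfold vsub; rewrite vopp_add, vadd_assoc; reflexivity. Qed.

Lemma vsub_addl (a x b : V) : vsub (vadd V a x) b = vadd V (vsub a b) x.
Proof. unfold vsub; rewrite <- !vadd_assoc, (vadd_comm V x); reflexivity. Qed.

Lemma vswap (a b c : V) : vadd V a (vadd V b c) = vadd V b (vadd V a c).
Proof. rewrite !vadd_assoc, (vadd_comm V a b); reflexivity. Qed.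

Lemma vsub_recenter (y0 z u v : V) :
  vsub z (vsub u v) = vsub (vsub y0 u) (vsub (vsub y0 z) v).
Proof.
  unfold vsub; rewrite !vopp_add, !vopp_opp, <- !vadd_assoc.
  rewrite (vswap (vopp V u) (vopp V y0)), (vadd_assoc V y0), vadd_opp, vadd_0l.
  rewrite (vswap (vopp V u) z); reflexivity.
Qed.

Lemma vscal_sub (c : R) (p q : V) :
  vscal V c (vsub p q) = vsub (vscal V c p) (vscal V c q).
Proof. unfold vsub; rewrite vscal_addr, !vopp_scal, !vscal_assoc, Rmult_comm; reflexivity. Qed.

Lemma vscal_inv (c : R) (p : V) : c <> 0 -> vscal V c (vscal V (/ c) p) = p.
Proof. intro Hc; rewrite vscal_assoc, Rinv_r by exact Hc; apply vscal_1. Qed.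

End VectorAlgebra.
Section ProbabilisticNorm.
Variable X : PNSpace.
Implicit Types p q z : X.

Lemma nu_bounds p x : 0 <= nu X p x <= 1.
Proof. apply (nu_ddf X p). Qed.

Lemma nu_mono p x y : x <= y -> nu X p x <= nu X p y.
Proof. apply (nu_ddf X p). Qed.

Lemma nu_nonpos p x : x <= 0 -> nu X p x = 0.
Proof.
  intro Hx; pose proof (nu_mono p x 0 Hx); pose proof (nu_bounds p x).
  destruct (nu_ddf X p) as [_ [_ [_ Hp0]]]; lra.
Qed.

Lemma nu_add p q a b : Rmin (nu X p a) (nu X q b) <= nu X (vadd X p q) (a + b).
Proof. exact (nu_triangle X p q (a + b) a b eq_refl). Qed.

Lemma nu_zero x : 0 < x -> nu X (vzero X) x = 1.
Proof.
  intro Hx; rewrite (proj2 (nu_H0 X (vzero X)) eq_refl).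
  unfold H0; destruct (Rle_dec x 0); lra.
Qed.

Lemma nu_opp p x : nu X (vopp X p) x = nu X p x.
Proof.
  destruct (Rle_dec x 0) as [Hx|Hx]; [rewrite !nu_nonpos; auto|].
  rewrite vopp_scal, nu_scal by lra.
  replace (Rabs (-1)) with 1 by (rewrite Rabs_left; lra); f_equal; field.
Qed.

Lemma nu_sub_sym p q x : nu X (vsub p q) x = nu X (vsub q p) x.
Proof. rewrite <- vopp_sub; apply nu_opp. Qed.

Lemma nu_scal_pos p c a : 0 < c -> 0 <= a -> nu X (vscal X c p) a = nu X p (a / c).
Proof. intros; rewrite nu_scal, Rabs_right by lra; reflexivity. Qed.

(* The paper's neighbourhood [N_0(t)]; note that [Nbd p t q] unfolds to [N0 (vsub p q) t]. *)
Definition N0 p (t : R) : Prop := nu X p t > 1 - t.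

Lemma N0_pos p t : N0 p t -> 0 < t.
Proof. unfold N0; pose proof (nu_bounds p t); lra. Qed.

Lemma N0_mono p a b : a <= b -> N0 p a -> N0 p b.
Proof. unfold N0; pose proof (nu_mono p a b); lra. Qed.

Lemma N0_add p q a b : N0 p a -> N0 q b -> N0 (vadd X p q) (a + b).
Proof.
  intros Hp Hq; pose proof (N0_pos p a Hp); pose proof (N0_pos q b Hq).
  unfold N0 in *; pose proof (nu_add p q a b).
  unfold Rmin in *; destruct (Rle_dec _ _); lra.
Qed.

Lemma N0_opp p a : N0 p a -> N0 (vopp X p) a.
Proof. unfold N0; rewrite nu_opp; auto. Qed.

Lemma N0_sub p q a b : N0 p a -> N0 q b -> N0 (vsub p q) (a + b).
Proof. intros; apply N0_add; [|apply N0_opp]; assumption. Qed.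

Lemma N0_zero a : 0 < a -> N0 (vzero X) a.
Proof. unfold N0; intro; rewrite nu_zero; lra. Qed.

Lemma N0_scal p c r : 0 < c -> N0 p (Rmin r (r / c)) -> N0 (vscal X c p) r.
Proof.
  intros Hc Hp; pose proof (N0_pos _ _ Hp) as Hm.
  assert (Hr : 0 < r) by (pose proof (Rmin_l r (r / c)); lra).
  unfold N0 in *; rewrite nu_scal_pos by lra.
  pose proof (nu_mono p _ _ (Rmin_r r (r / c))); pose proof (Rmin_l r (r / c)); lra.
Qed.

Lemma N0_all_eq0 p : (forall t, 0 < t -> N0 p t) -> p = vzero X.
Proof.
  intro Hp; apply (nu_H0 X); intro x; unfold H0.
  destruct (Rle_dec x 0) as [Hx|Hx]; [now apply nu_nonpos|].
  pose proof (nu_bounds p x).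
  destruct (Rle_dec 1 (nu X p x)); [lra|exfalso].
  set (t := Rmin x (1 - nu X p x)).
  assert (Ht : 0 < t) by (unfold t, Rmin; destruct (Rle_dec _ _); lra).
  pose proof (Hp t Ht); unfold N0 in *.
  pose proof (nu_mono p t x (Rmin_l _ _)) as Hmono.
  assert (t <= 1 - nu X p x) by apply Rmin_r.
  lra.
Qed.

Lemma Nbd_refl p a : 0 < a -> Nbd p a p.
Proof. intro; unfold Nbd; rewrite vsub_xx; now apply N0_zero. Qed.

Lemma Nbd_mono p q a b : a <= b -> Nbd p a q -> Nbd p b q.
Proof. apply N0_mono. Qed.

Lemma Nbd_sym p q a : Nbd p a q -> Nbd q a p.
Proof. unfold Nbd; rewrite nu_sub_sym; auto. Qed.

Lemma Nbd_trans p q z a b : Nbd p a q -> Nbd q b z -> Nbd p (a + b) z.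
Proof. unfold Nbd; intros; rewrite (vsub_chain X p z q); now apply N0_add. Qed.

(* Left continuity of [nu (y - z)] at [s] leaves room for a small ball around [z]. *)
Lemma Nbd_inner y z s : Nbd y s z -> exists e, 0 < e /\ forall w, Nbd z e w -> Nbd y s w.
Proof.
  intro H; pose proof (N0_pos _ _ H) as Hs; unfold Nbd, N0 in *.
  destruct (nu_ddf X (vsub y z)) as [_ [_ [Hlc _]]].
  destruct (Hlc s (nu X (vsub y z) s - (1 - s))) as [d [Hd Hnear]]; [lra|].
  set (e := Rmin d s / 2).
  assert (He : 0 < e /\ e <= d / 2 /\ e <= s / 2).
  { unfold e; pose proof (Rmin_l d s); pose proof (Rmin_r d s).
    unfold Rmin in *; destruct (Rle_dec d s); lra. }
  exists e; split; [lra|]; intros w Hw.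
  pose proof (Hnear (s - e) ltac:(lra)).
  pose proof (nu_add (vsub y z) (vsub z w) (s - e) e) as Hadd.
  rewrite <- vsub_chain in Hadd; replace (s - e + e) with s in Hadd by ring.
  unfold Rmin in Hadd; destruct (Rle_dec _ _); lra.
Qed.

Lemma Nbd_all_eq p q : (forall t, 0 < t -> Nbd p t q) -> p = q.
Proof. intro H; apply vsub_eq0, N0_all_eq0, H. Qed.

End ProbabilisticNorm.
Lemma pow_half_pos (n : nat) : 0 < (/ 2) ^ n.
Proof. apply pow_lt; lra. Qed.

Lemma pow_half_small (eps : R) : 0 < eps -> exists N, forall n, (N <= n)%nat -> (/ 2) ^ n < eps.
Proof.
  intro He; destruct (pow_lt_1_zero (/ 2) ltac:(rewrite Rabs_right; lra) eps He) as [N HN].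
  exists N; intros n Hn; specialize (HN n Hn).
  rewrite Rabs_right in HN; [lra|apply Rle_ge, Rlt_le, pow_half_pos].
Qed.

Section Limits.
Variable X : PNSpace.

Lemma strongly_converges_unique (s : nat -> X) p q :
  strongly_converges s p -> strongly_converges s q -> p = q.
Proof.
  intros Hp Hq; apply Nbd_all_eq; intros t Ht.
  destruct (Hp (t / 2) ltac:(lra)) as [N1 HN1], (Hq (t / 2) ltac:(lra)) as [N2 HN2].
  replace t with (t / 2 + t / 2) by field.
  apply (Nbd_trans X _ (s (Nat.max N1 N2))); [apply HN1 | apply Nbd_sym, HN2]; lia.
Qed.

Lemma N0_limit (s : nat -> X) p b e :
  strongly_converges s p -> (forall n, N0 X (s n) b) -> 0 < e -> N0 X p (e + b).
Proof.
  intros Hs Hb He; destruct (Hs e He) as [N HN].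
  rewrite <- (vsub_addK X p (s N)); apply N0_add; [apply HN; lia | apply Hb].
Qed.

Fixpoint psum (x : nat -> X) (n : nat) : X :=
  match n with
  | O => x O
  | S n => vadd X (psum x n) (x (S n))
  end.

Variables (x : nat -> X) (a : R).
Hypothesis Hx : forall k, N0 X (x k) (a * (/ 2) ^ k).

Lemma psum_bound n : N0 X (psum x n) (a * (2 - (/ 2) ^ n)).
Proof.
  induction n as [|n IH]; simpl.
  - replace (a * (2 - 1)) with (a * 1) by ring; apply Hx.
  - replace (a * (2 - / 2 * (/ 2) ^ n)) with (a * (2 - (/ 2) ^ n) + a * (/ 2 * (/ 2) ^ n))
      by field.
    apply N0_add; [exact IH | apply Hx].
Qed.

Lemma psum_tail n d :
  N0 X (vsub (psum x (S d + n)) (psum x n)) (a * ((/ 2) ^ n - (/ 2) ^ (S d + n))).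
Proof.
  induction d as [|d IH]; simpl plus; simpl psum.
  - rewrite vsub_addl, vsub_xx, vadd_0l.
    replace (a * ((/ 2) ^ n - (/ 2) ^ S n)) with (a * (/ 2) ^ S n) by (simpl; field).
    apply Hx.
  - rewrite vsub_addl.
    replace (a * ((/ 2) ^ n - (/ 2) ^ S (S (d + n))))
      with (a * ((/ 2) ^ n - (/ 2) ^ S (d + n)) + a * (/ 2) ^ S (S (d + n))) by (simpl; field).
    apply N0_add; [exact IH | apply Hx].
Qed.

Lemma psum_Cauchy : 0 < a -> strongly_Cauchy (psum x).
Proof.
  intros Ha t Ht; destruct (pow_half_small (t / a)) as [N HN]; [now apply Rdiv_lt_0_compat|].
  assert (Hsmall : forall n m, (N <= n < m)%nat -> N0 X (vsub (psum x m) (psum x n)) t).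
  { intros n m Hnm; replace m with (S (m - S n) + n)%nat by lia.
    eapply N0_mono; [|apply psum_tail].
    pose proof (HN n (proj1 Hnm)); pose proof (pow_half_pos (S (m - S n) + n)).
    apply (Rmult_lt_compat_l a) in H; [|lra].
    replace (a * (t / a)) with t in H by (field; lra); nra. }
  exists N; intros m n Hm Hn.
  destruct (Nat.lt_total m n) as [Hlt|[<-|Hgt]].
  - apply Hsmall; lia.
  - unfold N0; rewrite vsub_xx; now apply N0_zero.
  - unfold N0; rewrite nu_sub_sym; apply Hsmall; lia.
Qed.

End Limits.

Arguments psum {X} x n.

Section LinearMaps.
Variables V W : PNSpace.
Variable f : V -> W.

Lemma linear_vsub : is_linear f -> forall x y, f (vsub x y) = vsub (f x) (f y).
Proof.
  intros [Hadd Hscal] x y; unfold vsub.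
  rewrite Hadd, !vopp_scal, Hscal; reflexivity.
Qed.

Lemma continuous_converges (s : nat -> V) p :
  strongly_continuous f -> strongly_converges s p ->
  strongly_converges (fun n => f (s n)) (f p).
Proof.
  intros Hf Hs r Hr.
  set (U := fun z : W => exists e, 0 < e /\ forall w, Nbd z e w -> Nbd (f p) r w).
  assert (HU : strongly_open U).
  { intros z [e [He Hz]]; exists (e / 2); split; [lra|]; intros q Hq.
    exists (e / 2); split; [lra|]; intros w Hw; apply Hz.
    replace e with (e / 2 + e / 2) by field; eapply Nbd_trans; eassumption. }
  destruct (Hf U HU p) as [t [Ht Hp]]; [exists r; split; auto|].
  destruct (Hs t Ht) as [N HN]; exists N; intros n Hn.
  destruct (Hp (s n) (HN n Hn)) as [e [He Hn']].
  apply Hn', Nbd_refl, He.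
Qed.

Lemma linear_continuous_at0 :
  is_linear f -> (forall t, 0 < t -> exists s, 0 < s /\ forall q, N0 V q s -> N0 W (f q) t) ->
  strongly_continuous f.
Proof.
  intros Hlin Hf U HU p Hp; destruct (HU (f p) Hp) as [t [Ht HUt]].
  destruct (Hf t Ht) as [s [Hs Hfs]]; exists s; split; [exact Hs|].
  intros q Hq; apply HUt; unfold Nbd; rewrite <- linear_vsub by exact Hlin.
  now apply Hfs.
Qed.

End LinearMaps.
Section Baire.
Variable X : PNSpace.
Hypothesis hX : strongly_complete X.

Definition dense_in (P : X -> Prop) (y : X) (s : R) : Prop :=
  forall z, Nbd y s z -> forall r, 0 < r -> exists a, P a /\ Nbd z r a.

Lemma nested_balls (c : nat -> X) (r : nat -> R) :
  (forall n, 0 < r n) -> (forall n, r n <= (/ 2) ^ n) ->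
  (forall n w, Nbd (c (S n)) (r (S n)) w -> Nbd (c n) (r n) w) ->
  exists y, forall n, Nbd (c n) (2 * r n) y.
Proof.
  intros Hpos Hsmall Hnest.
  assert (Hin : forall k m, (k <= m)%nat -> Nbd (c k) (r k) (c m)).
  { intros k m Hkm; replace m with (m - k + k)%nat by lia.
    assert (Hsub : forall d w, Nbd (c (d + k)%nat) (r (d + k)%nat) w -> Nbd (c k) (r k) w).
    { induction d as [|d IH]; intros w Hw; [exact Hw|]; apply IH, Hnest, Hw. }
    apply (Hsub (m - k)%nat), Nbd_refl, Hpos. }
  assert (HC : strongly_Cauchy c).
  { intros t Ht; destruct (pow_half_small (t / 2)) as [N HN]; [lra|].
    exists N; intros m n Hm Hn.
    pose proof (Nbd_trans X _ _ _ _ _ (Nbd_sym X _ _ _ (Hin N n ltac:(lia))) (Hin N m ltac:(lia))).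
    eapply Nbd_mono; [|eassumption]; pose proof (HN N (le_n N)); pose proof (Hsmall N); lra. }
  destruct (hX c HC) as [y Hy]; exists y; intro n.
  destruct (Hy (r n) (Hpos n)) as [N HN].
  replace (2 * r n) with (r n + r n) by ring.
  eapply Nbd_trans; [apply (Hin n (Nat.max N n)); lia | apply Nbd_sym, HN; lia].
Qed.

Lemma not_dense_shrink (P : X -> Prop) y s : 0 < s -> ~ dense_in P y s ->
  exists z s', 0 < s' /\ s' <= s / 2 /\ (forall w, Nbd z (2 * s') w -> Nbd y s w) /\
    (forall a, P a -> ~ Nbd z (2 * s') a).
Proof.
  intros Hs Hnd.
  destruct (not_all_ex_not _ _ Hnd) as [z Hz].
  destruct (imply_to_and _ _ Hz) as [Hyz Hz'].
  destruct (not_all_ex_not _ _ Hz') as [r Hr].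
  destruct (imply_to_and _ _ Hr) as [Hr0 Hr'].
  destruct (Nbd_inner X y z s Hyz) as [e [He Hinner]].
  set (s' := Rmin e (Rmin r s) / 2).
  assert (Hs' : 0 < s' /\ 2 * s' <= e /\ 2 * s' <= r /\ s' <= s / 2).
  { unfold s'; pose proof (Rmin_l e (Rmin r s)); pose proof (Rmin_r e (Rmin r s)).
    pose proof (Rmin_l r s); pose proof (Rmin_r r s).
    unfold Rmin in *; destruct (Rle_dec r s), (Rle_dec e _); lra. }
  exists z, s'; repeat split; try lra.
  - intros w Hw; apply Hinner; eapply Nbd_mono; [|exact Hw]; lra.
  - intros a Ha Hza; apply Hr'; exists a; split; [exact Ha|].
    eapply Nbd_mono; [|exact Hza]; lra.
Qed.

(* Baire category: if [P n] were nowhere dense for every [n], a nested sequence of balls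
   avoiding [P 0], [P 1], ... would shrink to a point outside every [P n]. *)
Lemma baire (P : nat -> X -> Prop) : (forall w, exists n, P n w) ->
  exists n y s, 0 < s /\ dense_in (P n) y s.
Proof.
  intro Hcover; apply NNPP; intro Hnone.
  assert (Hstep : forall kb : nat * (X * R), exists b : X * R, 0 < snd (snd kb) ->
    0 < snd b /\ snd b <= snd (snd kb) / 2 /\
    (forall w, Nbd (fst b) (2 * snd b) w -> Nbd (fst (snd kb)) (snd (snd kb)) w) /\
    (forall a, P (fst kb) a -> ~ Nbd (fst b) (2 * snd b) a)).
  { intros [k [y s]]; destruct (Rlt_dec 0 s) as [Hs|Hs]; [|exists (y, s); simpl; lra].
    destruct (not_dense_shrink (P k) y s Hs) as [z [s' Hz]].
    { intro Hd; apply Hnone; exists k, y, s; auto. }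
    exists (z, s'); intros _; exact Hz. }
  destruct (choice _ Hstep) as [g Hg].
  set (ball := fix ball n := match n with O => (vzero X, 1) | S n => g (n, ball n) end).
  assert (Hpos : forall n, 0 < snd (ball n)).
  { induction n as [|n IH]; [simpl; lra | apply (Hg (n, ball n) IH)]. }
  pose proof (fun n => Hg (n, ball n) (Hpos n)) as Hspec; simpl in Hspec.
  destruct (nested_balls (fun n => fst (ball n)) (fun n => snd (ball n)) Hpos)
    as [y Hy].
  - induction n as [|n IH]; [simpl; lra|]; simpl pow.
    destruct (Hspec n) as [_ [Hhalf _]]; change (ball (S n)) with (g (n, ball n)); lra.
  - intros n w Hw; destruct (Hspec n) as [Hpos' [_ [Hsub _]]].
    apply Hsub; eapply Nbd_mono; [|exact Hw]; simpl; lra.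
  - destruct (Hcover y) as [k Hk]; destruct (Hspec k) as [_ [_ [_ Havoid]]].
    exact (Havoid y Hk (Hy (S k))).
Qed.

End Baire.
Section OpenMapping.
Variables V W : PNSpace.
Variable T : V -> W.
Hypothesis hT : is_linear T.

Definition almost_open : Prop :=
  forall t, 0 < t -> exists s, 0 < s /\
    forall y, N0 W y s -> forall r, 0 < r -> exists x, N0 V x t /\ Nbd y r (T x).

Definition open_at0 : Prop :=
  forall t, 0 < t -> exists s, 0 < s /\ forall y, N0 W y s -> exists x, N0 V x t /\ T x = y.

Lemma dense_image_difference (S : V -> Prop) y0 s0 :
  dense_in W (fun w => exists x, S x /\ T x = w) y0 s0 ->
  forall z, N0 W z s0 -> forall rho, 0 < rho ->
  exists x1 x2, S x1 /\ S x2 /\ N0 W (vsub z (T (vsub x2 x1))) (rho + rho).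
Proof.
  intros Hdense z Hz rho Hrho.
  assert (Hz' : Nbd y0 s0 (vsub y0 z)) by (unfold Nbd; rewrite vsub_sub_self; exact Hz).
  destruct (Hdense _ Hz' rho Hrho) as [a1 [[x1 [Hx1 <-]] H1]].
  destruct (Hdense y0 (Nbd_refl W y0 s0 (N0_pos W z s0 Hz)) rho Hrho) as [a2 [[x2 [Hx2 <-]] H2]].
  exists x1, x2; split; [exact Hx1|]; split; [exact Hx2|].
  rewrite (linear_vsub V W T hT), (vsub_recenter W y0 z).
  now apply N0_sub.
Qed.

Lemma surjective_almost_open :
  strongly_complete W -> (forall y, exists x, T x = y) -> almost_open.
Proof.
  intros hW hsurj t Ht.
  set (Lvl n := fun x => nu V x (INR (S n)) > 1 - t / 2).
  destruct (baire W hW (fun n w => exists x, Lvl n x /\ T x = w)) as [n [y0 [s0 [Hs0 Hdense]]]].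
  { intro w; destruct (hsurj w) as [x <-].
    destruct (nu_proper V x (t / 2) ltac:(lra)) as [M HM].
    destruct (INR_unbounded M) as [n Hn]; exists n, x; split; [|reflexivity].
    pose proof (HM (INR (S n)) ltac:(rewrite S_INR; lra)) as Hx.
    apply Rabs_def2 in Hx; unfold Lvl; lra. }
  set (N := INR (S n)); assert (HN : 0 < N) by apply lt_0_INR, Nat.lt_0_succ.
  set (c := t / (2 * N)); assert (Hc : 0 < c) by (apply Rdiv_lt_0_compat; lra).
  exists (Rmin s0 (s0 / / c)); split.
  { unfold Rmin; destruct (Rle_dec _ _); [lra|].
    apply Rdiv_lt_0_compat; [lra | now apply Rinv_0_lt_compat]. }
  intros y Hy r Hr.
  assert (Hy' : N0 W (vscal W (/ c) y) s0) by (apply N0_scal; [now apply Rinv_0_lt_compat | exact Hy]).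
  set (rho := Rmin r (r / c) / 2).
  assert (Hrho : 0 < rho).
  { unfold rho, Rmin; destruct (Rle_dec _ _); [lra|].
    assert (0 < r / c) by (apply Rdiv_lt_0_compat; lra); lra. }
  destruct (dense_image_difference (Lvl n) y0 s0 Hdense _ Hy' rho Hrho)
    as [x1 [x2 [Hx1 [Hx2 Happrox]]]].
  exists (vscal V c (vsub x2 x1)); split.
  - unfold N0; rewrite nu_scal_pos by lra.
    replace (t / c) with (N + N) by (unfold c; field; lra).
    pose proof (nu_add V x2 (vopp V x1) N N) as Hsub; rewrite nu_opp in Hsub.
    unfold Lvl in Hx1, Hx2; fold N in Hx1, Hx2.
    pose proof (Rmin_glb_lt _ _ (1 - t / 2) Hx2 Hx1); unfold vsub; lra.
  - unfold Nbd; rewrite (proj2 hT).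
    rewrite <- (vscal_inv W c y) by lra; rewrite <- vscal_sub.
    apply N0_scal; [exact Hc|].
    replace (Rmin r (r / c)) with (rho + rho) by (unfold rho; field); exact Happrox.
Qed.

Lemma residual_sequence (A : nat -> W -> Prop) (B : nat -> V -> Prop) :
  (forall k e, A k e -> exists x, B k x /\ A (S k) (vsub e (T x))) ->
  forall y, A O y -> exists x : nat -> V, forall n, B n (x n) /\ A (S n) (vsub y (T (psum x n))).
Proof.
  intros Hstep y Hy.
  assert (Hstep' : forall ke : nat * W, exists x,
    A (fst ke) (snd ke) -> B (fst ke) x /\ A (S (fst ke)) (vsub (snd ke) (T x))).
  { intros [k e]; destruct (classic (A k e)) as [He|He].
    - destruct (Hstep k e He) as [x Hx]; exists x; auto.
    - exists (vzero V); intro; contradiction. }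
  destruct (choice _ Hstep') as [g Hg].
  set (res := fix res n := match n with O => y | S n => vsub (res n) (T (g (n, res n))) end).
  assert (HA : forall n, A n (res n)).
  { induction n as [|n IH]; [exact Hy | apply (Hg (n, res n) IH)]. }
  exists (fun n => g (n, res n)).
  assert (Hres : forall n, res (S n) = vsub y (T (psum (fun n => g (n, res n)) n))).
  { induction n as [|n IH]; [reflexivity|].
    change (res (S (S n))) with (vsub (res (S n)) (T (g (S n, res (S n))))).
    simpl psum; rewrite (proj1 hT), <- vsub_add, <- IH; reflexivity. }
  intro n; rewrite <- Hres; apply (Hg (n, res n) (HA n)).
Qed.

(* Successive approximation: solve [T x = y] up to a residual in [N0 (sg k)] at stage [k],
   with corrections in [N0 (t/4 * 2^-k)] that sum to a point of [N0 t]. *)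
Lemma almost_open_open :
  strongly_complete V -> strongly_continuous T -> almost_open -> open_at0.
Proof.
  intros hV hC Halmost t Ht.
  set (tk k := t / 4 * (/ 2) ^ k).
  assert (Htk : forall k, 0 < tk k) by (intro k; pose proof (pow_half_pos k); unfold tk; nra).
  destruct (choice _ (fun k => Halmost (tk k) (Htk k))) as [sf Hsf].
  set (sg k := Rmin (sf k) ((/ 2) ^ k)).
  assert (Hsg : forall k, 0 < sg k /\ sg k <= (/ 2) ^ k).
  { intro k; pose proof (proj1 (Hsf k)); pose proof (pow_half_pos k).
    unfold sg, Rmin; destruct (Rle_dec _ _); lra. }
  assert (Hstep : forall k e, N0 W e (sg k) ->
    exists x, N0 V x (tk k) /\ N0 W (vsub e (T x)) (sg (S k))).
  { intros k e He; apply (proj2 (Hsf k)); [|apply Hsg].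
    eapply N0_mono; [apply Rmin_l | exact He]. }
  exists (sg O); split; [apply Hsg|]; intros y Hy.
  destruct (residual_sequence _ _ Hstep y Hy) as [xs Hxs].
  assert (Hxs' : forall k, N0 V (xs k) (t / 4 * (/ 2) ^ k)) by apply Hxs.
  destruct (hV _ (psum_Cauchy V xs (t / 4) Hxs' ltac:(lra))) as [x Hx].
  exists x; split.
  - replace t with (t / 2 + t / 2) by field.
    apply (N0_limit V _ _ _ _ Hx); [|lra]; intro n.
    eapply N0_mono; [|apply (psum_bound V xs _ Hxs')]; pose proof (pow_half_pos n); nra.
  - apply (strongly_converges_unique W (fun n => T (psum xs n)));
      [now apply continuous_converges|].
    intros r Hr; destruct (pow_half_small r Hr) as [N HN]; exists N; intros n Hn.
    eapply N0_mono; [|apply Hxs]; pose proof (Hsg (S n)); pose proof (HN (S n) ltac:(lia)); lra.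
Qed.

Lemma inverse_linear (Tinv : W -> V) :
  (forall x, Tinv (T x) = x) -> (forall y, T (Tinv y) = y) -> is_linear Tinv.
Proof.
  intros hl hr; destruct hT as [Hadd Hscal]; split.
  - intros x y; rewrite <- (hr x), <- (hr y) at 1; rewrite <- Hadd, hl; reflexivity.
  - intros a x; rewrite <- (hr x) at 1; rewrite <- Hscal, hl; reflexivity.
Qed.

Lemma open_inverse_in_B (Tinv : W -> V) :
  (forall x, Tinv (T x) = x) -> (forall y, T (Tinv y) = y) -> open_at0 -> in_B Tinv.
Proof.
  intros hl hr Hopen; pose proof (inverse_linear Tinv hl hr) as Hlin.
  split; [exact Hlin|]; apply (linear_continuous_at0 W V Tinv Hlin).
  intros t Ht; destruct (Hopen t Ht) as [s [Hs Hsmall]]; exists s; split; [exact Hs|].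
  intros q Hq; destruct (Hsmall q Hq) as [x [Hx <-]]; rewrite hl; exact Hx.
Qed.

End OpenMapping.

Theorem corollary4p6 (V W : PNSpace) (T : V -> W)
  (hV : strongly_complete V) (hW : strongly_complete W)
  (hT : in_B T)
  (hinj : forall x y, T x = T y -> x = y)
  (hsurj : forall y, exists x, T x = y)
  (Tinv : W -> V)
  (hl : forall x, Tinv (T x) = x) (hr : forall y, T (Tinv y) = y) :
  in_B Tinv.
Proof.
  destruct hT as [Hlin Hcont].
  apply (open_inverse_in_B V W T Hlin Tinv hl hr).
  apply almost_open_open; [exact Hlin | exact hV | exact Hcont |].
  exact (surjective_almost_open V W T Hlin hW hsurj).
Qed.
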